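(* For any two information trees $\mathcal T,\mathcal T'$ on $\mathcal I$: (i) $\mathcal T\succeq_{dif}\mathcal T'$ if and only if $\mathcal T\succeq_{FO}\mathcal T'$; (ii) $\mathcal T\succeq_{FO}\mathcal T'$ if and only if $\mathcal T'\succeq_{SO}\mathcal T$.
   Context: Model. Fix an integer $I\ge2$, agents $\mathcal I=\{1,\dots,I\}$, a prior $\rho\in(0,1)$ and a loss probability $\varepsilon\in(0,1)$. A state of nature $\theta\in\{g,b\}$ has $\Pr(\theta=g)=\rho$. A forest $F$ on $\mathcal I$ is a collection of vertex-disjoint undirected trees $T^1,\dots,T^R$ whose vertex sets partition $\mathcal I$; a seeding $s=(s^1,\dots,s^R)$ chooses exactly one vertex $s^r$ of each $T^r$. The pair $\mathcal T=(F,s)$ is an information tree: orient each $T^r$ away from $s^r$ and add a root $0$ (the planner) with an arc $0\to s^r$ for each $r$. If $\theta=b$ no messages are sent. If $\theta=g$ the planner sends a message along each arc $0\to s^r$, and every agent who receives a message forwards it along every arc leaving her. Each transmission along an arc is lost independently with probability $\varepsilon$. Agent $i$ observes only $x_i\in\{y,n\}$. $\Omega=\{g,b\}\times\{y,n\}^I$, $\mathbb P_{\mathcal T}$ the induced probability. $G=\{\theta=g\}$, $Y_i=\{x_i=y\}$, $N_i=\Omega\setminus Y_i$, $Y^*=\bigcap_iY_i$. Orders: let $d(i)$ (resp. $d'(i)$) be the number of arcs on the path from $0$ to $i$ in $\mathcal T$ (resp. $\mathcal T'$). $\mathcal T\succeq_{dif}\mathcal T'$ if there is a permutation $\pi$ of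 $\mathcal I$ with $d(i)\le d'(\pi(i))$ for all $i$. $\mathcal T\succeq_{FO}\mathcal T'$ if there is a permutation $\pi$ such that for every $i$ the binary experiment ''signal $x_i$ about the event $G$ vs. $\Omega\setminus G$'' under $\mathbb P_{\mathcal T}$ is Blackwell (weakly) more informative than the experiment ''signal $x_{\pi(i)}$ about $G$ vs. $\Omega\setminus G$'' under $\mathbb P_{\mathcal T'}$. $\mathcal T\succeq_{SO}\mathcal T'$ is defined in the same way with the event $Y^*$ in place of $G$. *)

From HB Require Import structures.
From mathcomp Require Import all_boot all_order all_algebra all_fingroup.
From mathcomp Require Import reals.
Set Implicit Arguments. Unset Strict Implicit. Unset Printing Implicit Defensive.
Import Order.TTheory GRing.Theory Num.Theory.
Local Open Scope ring_scope.

(* A forest with a seeding, oriented away from the seeds and with the  *)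
(* planner 0 attached to every seed, is exactly a rooted tree on       *)
(* {0} + agents; we represent it by the parent map of the agents:      *)
(* par i = None means the arc 0 -> i (i is a seed), par i = Some j     *)
(* means the arc j -> i.  Acyclicity: following parents from any agent *)
(* reaches the planner within n steps.                                 *)
Record info_tree (n : nat) := InfoTree {
  par : 'I_n -> option 'I_n;
  par_acyclic : forall i : 'I_n, iter n (obind par) (Some i) = None
}.

(* number of arcs on the path from 0 to i (fuel-based; fuel n suffices) *)
Fixpoint depth_fuel n (T : info_tree n) (k : nat) (i : 'I_n) : nat :=
  match k with
  | 0 => 0
  | k'.+1 => match par T i with
             | None => 1
             | Some j => (depth_fuel T k' j).+1
             end
  end.

Definition depth n (T : info_tree n) (i : 'I_n) : nat := depth_fuel T n i.

(* Given the outcome a of all transmissions (a i = true iff the arc into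
   agent i was NOT lost), does agent i receive the message? *)
Fixpoint reach_fuel n (T : info_tree n) (a : {ffun 'I_n -> bool})
   (k : nat) (i : 'I_n) : bool :=
  match k with
  | 0 => false
  | k'.+1 => a i && match par T i with
                    | None => true
                    | Some j => reach_fuel T a k' j
                    end
  end.

Definition reach n (T : info_tree n) (a : {ffun 'I_n -> bool}) (i : 'I_n) :=
  reach_fuel T a n i.

(* Sample space Omega = {g,b} x {y,n}^n : theta = true means g,
   x i = true means x_i = y. *)
Definition Omega (n : nat) : finType := (bool * {ffun 'I_n -> bool})%type.

Section Prob.
Variable R : realType.

Definition probT n (rho eps : R) (T : info_tree n) (w : Omega n) : R :=
  if w.1 then
    rho * \sum_(a : {ffun 'I_n -> bool})
            ((\prod_(i : 'I_n) (if a i then 1 - eps else eps)) *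
             (if [forall i, w.2 i == reach T a i] then 1 else 0))
  else (1 - rho) * (if [forall i, ~~ w.2 i] then 1 else 0).

Definition PrT n rho eps (T : info_tree n) (E : pred (Omega n)) : R :=
  \sum_(w | E w) probT rho eps T w.

Definition condPrT n rho eps (T : info_tree n) (A E : pred (Omega n)) : R :=
  PrT rho eps T (predI A E) / PrT rho eps T E.

Definition evG n : pred (Omega n) := fun w => w.1.
Definition evYstar n : pred (Omega n) := fun w => [forall i, w.2 i].
Definition evSig n (i : 'I_n) (s : bool) : pred (Omega n) :=
  fun w => w.2 i == s.

(* A binary experiment with signal space {y,n} (= bool): the distribution
   of the signal in each of the two states. *)
Definition blackwell_ge (p1 q1 p2 q2 : bool -> R) : Prop :=
  exists M : bool -> bool -> R,
    [/\ forall s t, 0 <= M s t,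
        forall s, \sum_(t : bool) M s t = 1,
        forall t, p2 t = \sum_(s : bool) p1 s * M s t
      & forall t, q2 t = \sum_(s : bool) q1 s * M s t].

Definition experiment n rho eps (T : info_tree n) (E : pred (Omega n))
    (i : 'I_n) : (bool -> R) * (bool -> R) :=
  (fun s => condPrT rho eps T (evSig i s) E,
   fun s => condPrT rho eps T (evSig i s) (predC E)).

Definition ge_event n rho eps (E : pred (Omega n)) (T T' : info_tree n) : Prop :=
  exists pi : {perm 'I_n}, forall i : 'I_n,
    blackwell_ge (experiment rho eps T E i).1 (experiment rho eps T E i).2
                 (experiment rho eps T' E (pi i)).1
                 (experiment rho eps T' E (pi i)).2.

Definition ge_FO n rho eps (T T' : info_tree n) := ge_event rho eps (@evG n) T T'.
Definition ge_SO n rho eps (T T' : info_tree n) := ge_event rho eps (@evYstar n) T T'.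

End Prob.

Definition ge_dif n (T T' : info_tree n) : Prop :=
  exists pi : {perm 'I_n}, forall i : 'I_n, (depth T i <= depth T' (pi i))%N.

From mathcomp Require Import all_boot all_order all_algebra all_fingroup.
From mathcomp Require Import reals ring lra.
Import Order.TTheory GRing.Theory Num.Theory.
Local Open Scope ring_scope.

Set Implicit Arguments. Unset Strict Implicit. Unset Printing Implicit Defensive.

(* Agent i hears the message exactly when the d(i) arcs on her path from the
   planner all survive, so given g she observes y with probability
   (1 - eps)^d(i), and given b she surely observes n.  Two such one-sided
   experiments are Blackwell ordered by their detection rates, hence by depth.
   Relative to Y*, the signal is y surely on Y*, and off Y* it is y with the
   false-alarm probability rho ((1 - eps)^d(i) - (1 - eps)^I) / Pr(Y* fails),
   which decreases with d(i); experiments that detect surely are ordered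
   inversely to their false-alarm rates, which reverses the depth order. *)

Section Ancestry.
Variables (n : nat) (T : info_tree n).

Fixpoint ancestry k (i : 'I_n) : seq 'I_n :=
  if k is k'.+1 then i :: (if par T i is Some j then ancestry k' j else [::])
  else [::].

Lemma depth_fuelE k i : depth_fuel T k i = size (ancestry k i).
Proof. by elim: k i => [|k IH] i //=; case: (par T i) => [j|] //=; rewrite IH. Qed.

Lemma iter_parent_None k : iter k (obind (par T)) None = None.
Proof. by elim: k => //= k ->. Qed.

Lemma reach_fuelE a k i :
  reach_fuel T a k i = all a (ancestry k i) && (iter k (obind (par T)) (Some i) == None).
Proof.
elim: k i => [|k IH] i //; rewrite iterSr /=.
by case: (par T i) => [j|] /=; rewrite ?IH ?iter_parent_None ?andbA ?andbT.
Qed.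

Lemma mem_ancestry k i x :
  x \in ancestry k i -> exists m, iter m (obind (par T)) (Some i) = Some x.
Proof.
elim: k i => [|k IH] i //=; rewrite inE => /orP [/eqP ->|]; first by exists 0%N.
case Ei: (par T i) => [j|] // /IH [m Hm].
by exists m.+1; rewrite iterSr /= Ei.
Qed.

Lemma iter_parent_cycle m i : iter m.+1 (obind (par T)) (Some i) != Some i.
Proof.
apply/eqP => cyc.
have iter_cyc t : iter (t * m.+1) (obind (par T)) (Some i) = Some i.
  by elim: t => [|t IHt] //; rewrite mulSn iterD IHt cyc.
by have := iter_cyc n; rewrite mulnSr iterD par_acyclic iter_parent_None.
Qed.

Lemma ancestry_uniq k i : uniq (ancestry k i).
Proof.
elim: k i => [|k IH] i //=; case Ei: (par T i) => [j|] //=; rewrite IH andbT.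
apply/negP => /mem_ancestry [m Hm].
by move: (iter_parent_cycle m i); rewrite iterSr /= Ei Hm eqxx.
Qed.

Lemma depthE i : depth T i = size (ancestry n i).
Proof. exact: depth_fuelE. Qed.

Lemma reachE a i : reach T a i = all a (ancestry n i).
Proof. by rewrite /reach reach_fuelE par_acyclic eqxx andbT. Qed.

Lemma ancestry_self k i : (0 < k)%N -> i \in ancestry k i.
Proof. by case: k => //= k _; rewrite inE eqxx. Qed.

Lemma forall_reach a : [forall i, reach T a i] = [forall i, a i].
Proof.
apply/forallP/forallP => H i; last by rewrite reachE; apply/allP => j _.
by move: (H i); rewrite reachE => /allP; apply; apply/ancestry_self/(leq_ltn_trans _ (ltn_ord i)).
Qed.

End Ancestry.

Section Bernoulli.
Variables (R : comRingType) (I : finType) (eps : R).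

Definition bern_weight (a : {ffun I -> bool}) : R :=
  \prod_i (if a i then 1 - eps else eps).

Definition bern_prob (f : pred {ffun I -> bool}) : R :=
  \sum_a bern_weight a * (f a)%:R.

Lemma eq_bern_prob f g : f =1 g -> bern_prob f = bern_prob g.
Proof. by move=> fg; apply: eq_bigr => a _; rewrite fg. Qed.

Lemma bern_probID f g :
  bern_prob f = bern_prob (predI f g) + bern_prob (predI f (predC g)).
Proof.
rewrite /bern_prob -big_split /=; apply: eq_bigr => a _.
by case: (f a); case: (g a); rewrite /= ?mulr0 ?addr0 ?add0r.
Qed.

Lemma bern_prob0 : bern_prob pred0 = 0.
Proof. by rewrite /bern_prob big1 // => a _; rewrite mulr0. Qed.

Lemma bern_prob_all (s : seq I) :
  uniq s -> bern_prob (fun a => all a s) = (1 - eps) ^+ size s.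
Proof.
move=> s_uniq.
(* Factor the indicator coordinatewise, then sum out each coordinate. *)
pose F i (b : bool) := (if b then 1 - eps else eps) * (if i \in s then b%:R else 1).
have weightE a : bern_weight a * (all a s)%:R = \prod_i F i (a i).
  rewrite big_split /= -big_mkcond /=; congr (_ * _).
  have [/allP all_s | /allPn [j sj /negbTE aj]] := boolP (all a s).
    by rewrite big1 // => i /all_s ->.
  by rewrite (bigD1 j) //= aj mul0r.
rewrite /bern_prob (eq_bigr _ (fun a _ => weightE a)) -(bigA_distr_bigA F).
rewrite (eq_bigr (fun i => if i \in s then 1 - eps else 1)); last first.
  by move=> i _; rewrite big_bool /F; case: (i \in s) => /=; ring.
by rewrite -big_mkcond prodr_const (card_uniqP s_uniq).
Qed.

Lemma bern_probT : bern_prob predT = 1.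
Proof. by rewrite (@eq_bern_prob _ (fun a => all a [::])) // bern_prob_all. Qed.

Lemma bern_probC f : bern_prob (predC f) = 1 - bern_prob f.
Proof. by rewrite -bern_probT (bern_probID predT f) addrC addKr. Qed.

End Bernoulli.

Section Decomposition.
Variables (R : realType) (n : nat) (rho eps : R) (T : info_tree n).

Definition received (a : {ffun 'I_n -> bool}) : {ffun 'I_n -> bool} :=
  [ffun i => reach T a i].

Let silent : {ffun 'I_n -> bool} := [ffun => false].

Lemma probT_pair (b : bool) x : probT rho eps T (b, x) =
  if b then rho * \sum_a bern_weight eps a * (x == received a)%:R
  else (1 - rho) * (x == silent)%:R.
Proof.
have indicatorE (c : bool) : (if c then 1 else 0) = c%:R :> R by case: c.
rewrite /probT; case: b => /=; rewrite ?indicatorE.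
  congr (_ * _); apply: eq_bigr => a _; rewrite indicatorE; congr (_ * (nat_of_bool _)%:R).
  by apply/forallP/eqP => [xa|->] *; [apply/ffunP => i; rewrite ffunE; apply/eqP|rewrite ffunE].
congr (_ * (nat_of_bool _)%:R).
by apply/forallP/eqP => [x0|->] *; [apply/ffunP => i; rewrite ffunE; apply/negbTE|rewrite ffunE].
Qed.

Lemma PrT_bern_prob (E : pred (Omega n)) : PrT rho eps T E =
  rho * bern_prob eps (fun a => E (true, received a)) + (1 - rho) * (E (false, silent))%:R.
Proof.
rewrite /PrT big_mkcond /= (_ : \sum_(w : Omega n) _ =
  \sum_(b : bool) \sum_x (if E (b, x) then probT rho eps T (b, x) else 0)); last first.
  by rewrite pair_bigA; apply: eq_bigr => -[].
rewrite big_bool /=.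
congr (_ + _).
  rewrite (eq_bigr (fun x => \sum_a rho *
      (bern_weight eps a * ((x == received a) && E (true, x))%:R))); last first.
    move=> x _; rewrite probT_pair mulr_sumr; case: (E (true, x)).
      by apply: eq_bigr => a _; rewrite andbT.
    by rewrite big1 // => a _; rewrite andbF !mulr0.
  rewrite exchange_big /bern_prob mulr_sumr; apply: eq_bigr => a _.
  by rewrite (bigD1 (received a)) //= eqxx big1 ?addr0 // => x /negbTE ->; rewrite !mulr0.
rewrite (bigD1 silent) //= probT_pair eqxx big1 ?addr0; first by case: (E _); rewrite ?mulr0.
by move=> x /negbTE x0; rewrite probT_pair x0 mulr0; case: (E _).
Qed.

End Decomposition.

Section BlackwellCoins.
Variable R : realType.

Definition coin (x : R) : bool -> R := fun s => if s then x else 1 - x.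

Lemma eq_blackwell_ge (p1 q1 p2 q2 p1' q1' p2' q2' : bool -> R) :
  p1 =1 p1' -> q1 =1 q1' -> p2 =1 p2' -> q2 =1 q2' ->
  blackwell_ge p1 q1 p2 q2 <-> blackwell_ge p1' q1' p2' q2'.
Proof.
move=> ep1 eq1 ep2 eq2; split=> -[M [M0 M1 Mp Mq]]; exists M; split=> // t.
- by rewrite -ep2 Mp; apply: eq_bigr => s _; rewrite ep1.
- by rewrite -eq2 Mq; apply: eq_bigr => s _; rewrite eq1.
- by rewrite ep2 Mp; apply: eq_bigr => s _; rewrite ep1.
- by rewrite eq2 Mq; apply: eq_bigr => s _; rewrite eq1.
Qed.

Lemma blackwell_ge_coin_detection (x y : R) : 0 < x -> 0 <= y ->
  blackwell_ge (coin x) (coin 0) (coin y) (coin 0) <-> y <= x.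
Proof.
move=> x_gt0 y_ge0; split=> [[M [M0 M1 Mp Mq]]|yx].
  have := Mp true; have := Mq true; have := M1 true.
  rewrite !big_bool /coin /= subr0 mul0r mul1r add0r => M1s Mt0 Mpt.
  have := M0 true false; have := M0 false true; nra.
have xy_ge0 : 0 <= y / x by rewrite divr_ge0 // ltW.
have xy_le1 : y / x <= 1 by rewrite ler_pdivrMr // mul1r.
exists (fun s t => if s then coin (y / x) t else coin 0 t).
split=> [[] [] | [] | [] | []]; rewrite ?big_bool /coin /=.
all: rewrite ?subr_ge0 ?subr0 ?ler01 ?lexx //; try (by ring); by field; rewrite gt_eqF.
Qed.

Lemma blackwell_ge_coin_false_alarm (r1 r2 : R) : r1 < 1 -> r2 <= 1 ->
  blackwell_ge (coin 1) (coin r1) (coin 1) (coin r2) <-> r1 <= r2.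
Proof.
move=> r1_lt1 r2_le1; split=> [[M [M0 M1 Mp Mq]]|r12].
  have := Mp true; have := Mq true.
  rewrite !big_bool /coin /= subrr mul0r mul1r addr0 => Mq1 Mp1.
  have := M0 false true; nra.
have r1_gap : 0 < 1 - r1 by rewrite subr_gt0.
pose m := (r2 - r1) / (1 - r1).
have m_ge0 : 0 <= m by rewrite divr_ge0 ?subr_ge0 // ltW.
have m_le1 : m <= 1 by rewrite ler_pdivrMr // mul1r; lra.
exists (fun s t => if s then coin 1 t else coin m t).
split=> [[] [] | [] | [] | []]; rewrite ?big_bool /coin /m /=.
all: rewrite ?subr_ge0 ?subrr ?ler01 ?lexx //; try (by ring); by field; rewrite gt_eqF.
Qed.

End BlackwellCoins.

Section Signals.
Variables (R : realType) (n : nat) (rho eps : R) (T : info_tree n).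

Let receivedE a i : received T a i = reach T a i.
Proof. by rewrite ffunE. Qed.

Lemma bern_prob_reach i :
  bern_prob eps (fun a => reach T a i) = (1 - eps) ^+ depth T i.
Proof.
rewrite (@eq_bern_prob _ _ _ _ (fun a => all a (ancestry T n i))) => [|a].
  by rewrite bern_prob_all ?ancestry_uniq ?depthE.
by rewrite reachE.
Qed.

Lemma bern_prob_reach_all :
  bern_prob eps (fun a => [forall i, reach T a i]) = (1 - eps) ^+ n.
Proof.
rewrite (@eq_bern_prob _ _ _ _ (fun a => all a (enum 'I_n))) => [|a].
  by rewrite bern_prob_all ?enum_uniq ?size_enum_ord.
by rewrite forall_reach; apply/forallP/allP => a_all i *; apply: a_all; rewrite ?mem_enum.
Qed.

Lemma PrT_G : PrT rho eps T (@evG n) = rho.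
Proof.
by rewrite PrT_bern_prob (@eq_bern_prob _ _ _ _ predT) // bern_probT mulr0 addr0 mulr1.
Qed.

Lemma PrT_notG : PrT rho eps T (predC (@evG n)) = 1 - rho.
Proof.
by rewrite PrT_bern_prob (@eq_bern_prob _ _ _ _ pred0) // bern_prob0 mulr0 add0r mulr1.
Qed.

Lemma PrT_sig_G i s :
  PrT rho eps T (predI (evSig i s) (@evG n)) = rho * coin ((1 - eps) ^+ depth T i) s.
Proof.
rewrite PrT_bern_prob /= andbF mulr0 addr0 -bern_prob_reach; congr (_ * _).
case: s; rewrite /coin /=; [|rewrite -bern_probC]; apply: eq_bern_prob => a;
  by rewrite /evSig /= andbT receivedE; case: reach.
Qed.

Lemma PrT_sig_notG i s :
  PrT rho eps T (predI (evSig i s) (predC (@evG n))) = (1 - rho) * coin 0 s.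
Proof.
rewrite PrT_bern_prob (@eq_bern_prob _ _ _ _ pred0) => [|a]; last by rewrite /= andbF.
by rewrite bern_prob0 mulr0 add0r /= /evSig ffunE; case: s; rewrite /= ?mulr0 ?subr0.
Qed.

Hypothesis n_gt0 : (0 < n)%N.

Let silent_notin_Ystar : evYstar (false, [ffun => false] : {ffun 'I_n -> bool}) = false.
Proof. by apply/negbTE/forallP => /(_ (Ordinal n_gt0)); rewrite ffunE. Qed.

Let received_Ystar a : evYstar (true, received T a) = [forall j, reach T a j].
Proof. by apply: eq_forallb => j; rewrite receivedE. Qed.

Lemma PrT_Ystar : PrT rho eps T (@evYstar n) = rho * (1 - eps) ^+ n.
Proof.
rewrite PrT_bern_prob silent_notin_Ystar mulr0 addr0 -bern_prob_reach_all.
by congr (_ * _); apply: eq_bern_prob => a; rewrite received_Ystar.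
Qed.

Lemma PrT_notYstar :
  PrT rho eps T (predC (@evYstar n)) = rho * (1 - (1 - eps) ^+ n) + (1 - rho).
Proof.
rewrite PrT_bern_prob /= silent_notin_Ystar mulr1 -bern_prob_reach_all -bern_probC.
by congr (_ * _ + _); apply: eq_bern_prob => a; rewrite /= received_Ystar.
Qed.

Lemma PrT_sig_Ystar i s :
  PrT rho eps T (predI (evSig i s) (@evYstar n)) = rho * (1 - eps) ^+ n * coin 1 s.
Proof.
rewrite PrT_bern_prob /= silent_notin_Ystar andbF mulr0 addr0 -bern_prob_reach_all.
case: s; rewrite /coin.
  rewrite mulr1; congr (_ * _); apply: eq_bern_prob => a /=.
  rewrite received_Ystar /evSig receivedE andbC.
  by case: (boolP [forall j, _]) => //= /forallP/(_ i) ->.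
rewrite subrr mulr0 (@eq_bern_prob _ _ _ _ pred0) ?bern_prob0 ?mulr0 // => a /=.
rewrite received_Ystar /evSig receivedE andbC.
by case: (boolP [forall j, _]) => //= /forallP/(_ i) ->.
Qed.

Lemma PrT_sig_notYstar i s :
  PrT rho eps T (predI (evSig i s) (predC (@evYstar n))) =
  if s then rho * ((1 - eps) ^+ depth T i - (1 - eps) ^+ n)
  else rho * (1 - (1 - eps) ^+ depth T i) + (1 - rho).
Proof.
rewrite PrT_bern_prob /= silent_notin_Ystar /evSig ffunE.
have reach_split := bern_probID eps (fun a => reach T a i) (fun a => [forall j, reach T a j]).
rewrite bern_prob_reach (@eq_bern_prob _ _ _ _ (fun a => [forall j, reach T a j])) in reach_split;
  last by move=> a /=; case: (boolP [forall j, _]) => [/forallP ->|]; rewrite ?andbF.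
case: s => /=.
  rewrite mulr0 addr0 reach_split bern_prob_reach_all addrC addKr; congr (_ * _).
  by apply: eq_bern_prob => a /=; rewrite received_Ystar receivedE; case: reach.
rewrite mulr1 -bern_prob_reach -bern_probC; congr (_ * _ + _).
apply: eq_bern_prob => a /=; rewrite received_Ystar receivedE.
by case: (boolP (reach T a i)) => //= reach_i; apply/forallP => /(_ i); rewrite (negbTE reach_i).
Qed.

End Signals.

Lemma exists_perm_inv (T : finType) (P : T -> T -> Prop) :
  (exists pi : {perm T}, forall i, P i (pi i)) ->
  exists pi : {perm T}, forall j, P (pi j) j.
Proof. by case=> pi P_pi; exists pi^-1%g => j; rewrite -{2}(permKV pi j). Qed.

Section Experiments.
Variables (R : realType) (n : nat) (rho eps : R).
Hypotheses (n_gt0 : (0 < n)%N) (rho01 : 0 < rho < 1) (eps01 : 0 < eps < 1).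

Definition more_informative_at (E : pred (Omega n)) (T : info_tree n) i T' j :=
  blackwell_ge (experiment rho eps T E i).1 (experiment rho eps T E i).2
               (experiment rho eps T' E j).1 (experiment rho eps T' E j).2.

Definition false_alarm (T : info_tree n) (i : 'I_n) : R :=
  rho * ((1 - eps) ^+ depth T i - (1 - eps) ^+ n) /
  (rho * (1 - (1 - eps) ^+ n) + (1 - rho)).

Let rho_gt0 : 0 < rho. Proof. by case/andP: rho01. Qed.
Let rho_lt1 : rho < 1. Proof. by case/andP: rho01. Qed.
Let keep_gt0 : 0 < 1 - eps. Proof. by case/andP: eps01 => _; rewrite subr_gt0. Qed.
Let keep_lt1 : 1 - eps < 1. Proof. by case/andP: eps01 => ? _; lra. Qed.
Let keepX_gt0 d : 0 < (1 - eps) ^+ d. Proof. exact: exprn_gt0. Qed.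
Let keepX_le1 d : (1 - eps) ^+ d <= 1. Proof. by rewrite exprn_ile1 ?ltW. Qed.
Let ler_keepX d d' : ((1 - eps) ^+ d <= (1 - eps) ^+ d') = (d' <= d)%N.
Proof. exact: ler_iXn2l. Qed.

Let notYstar_gt0 : 0 < rho * (1 - (1 - eps) ^+ n) + (1 - rho).
Proof. by have := keepX_le1 n; have := rho_gt0; have := rho_lt1; nra. Qed.

Lemma experiment_G (T : info_tree n) i :
  (experiment rho eps T (@evG n) i).1 =1 coin ((1 - eps) ^+ depth T i) /\
  (experiment rho eps T (@evG n) i).2 =1 coin 0.
Proof.
split=> s; rewrite /= /condPrT ?PrT_sig_G ?PrT_G ?PrT_sig_notG ?PrT_notG mulrAC divff ?mul1r //.
  by rewrite gt_eqF.
by rewrite subr_eq0 gt_eqF.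
Qed.

Lemma experiment_Ystar (T : info_tree n) i :
  (experiment rho eps T (@evYstar n) i).1 =1 coin 1 /\
  (experiment rho eps T (@evYstar n) i).2 =1 coin (false_alarm T i).
Proof.
split=> s; rewrite /= /condPrT ?PrT_sig_Ystar ?PrT_Ystar ?PrT_sig_notYstar ?PrT_notYstar //.
  by rewrite mulrAC divff ?mul1r // mulf_neq0 ?gt_eqF.
by case: s; rewrite /coin /false_alarm //; field; rewrite gt_eqF.
Qed.

Lemma more_informative_G_depth T i T' j :
  more_informative_at (@evG n) T i T' j <-> (depth T i <= depth T' j)%N.
Proof.
have [expT1 expT2] := experiment_G T i; have [expT'1 expT'2] := experiment_G T' j.
rewrite /more_informative_at (eq_blackwell_ge expT1 expT2 expT'1 expT'2).
by rewrite blackwell_ge_coin_detection ?ler_keepX // ltW.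
Qed.

Lemma more_informative_Ystar_depth T i T' j :
  more_informative_at (@evYstar n) T i T' j <-> (depth T' j <= depth T i)%N.
Proof.
have [expT1 expT2] := experiment_Ystar T i; have [expT'1 expT'2] := experiment_Ystar T' j.
have false_alarm_lt1 T'' k : false_alarm T'' k < 1.
  by rewrite ltr_pdivrMr // mul1r; have := keepX_gt0 n; have := rho_gt0; have := rho_lt1;
    have := keepX_le1 (depth T'' k); nra.
rewrite /more_informative_at (eq_blackwell_ge expT1 expT2 expT'1 expT'2).
rewrite blackwell_ge_coin_false_alarm ?false_alarm_lt1 ?(ltW (false_alarm_lt1 _ _)) //.
rewrite /false_alarm.
by rewrite ler_pM2r ?invr_gt0 // ler_pM2l // lerD2r ler_keepX.
Qed.

Lemma ge_FO_iff_dif (T T' : info_tree n) : ge_FO rho eps T T' <-> ge_dif T T'.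
Proof. by split=> -[pi le_pi]; exists pi => i; apply/more_informative_G_depth; apply: le_pi. Qed.

Lemma ge_SO_iff_dif (T T' : info_tree n) : ge_SO rho eps T' T <-> ge_dif T T'.
Proof.
split=> [|[pi le_pi]].
  case/(exists_perm_inv (P := fun i k => more_informative_at (@evYstar n) T' i T k)).
  by move=> pi le_pi; exists pi => i; apply/more_informative_Ystar_depth.
have [sigma le_sigma] := exists_perm_inv (P := fun i k => depth T i <= depth T' k)%N
  (ex_intro _ pi le_pi).
by exists sigma => k; apply/more_informative_Ystar_depth.
Qed.

End Experiments.

Theorem proposition4 (R : realType) (I : nat) (rho eps : R)
    (T T' : info_tree I) :
  (2 <= I)%N -> 0 < rho < 1 -> 0 < eps < 1 ->
  (ge_dif T T' <-> ge_FO rho eps T T') /\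
  (ge_FO rho eps T T' <-> ge_SO rho eps T' T).
Proof.
move=> I_ge2 rho01 eps01; have I_gt0 : (0 < I)%N by apply: leq_trans I_ge2.
by rewrite ge_FO_iff_dif // ge_SO_iff_dif.
Qed.
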